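(* There exist a finitely generated non-amenable group $\Gamma$ (for instance $\Gamma=C_2*C_2*C_2*C_2$) and a profinite action of $\Gamma$ that is ergodic, faithful, hyperfinite and topologically free.
   Context: A profinite action of $\Gamma$ is an action on an inverse limit $X=\varprojlim V_n$ of finite $\Gamma$-sets $V_1\leftarrow V_2\leftarrow\cdots$ with $\Gamma$-equivariant surjective bonding maps, equipped with the inverse limit topology and the probability measure induced by the normalized counting measures on the $V_n$; the action is measure preserving. Hyperfinite means the orbit equivalence relation is, up to a null set, an ascending union of finite measurable equivalence relations. Faithful means every nontrivial element acts nontrivially. Topologically free means the set of points not fixed by any nontrivial element of $\Gamma$ is comeager (equivalently, the fixed point set of each nontrivial element has empty interior). *)

From HB Require Import structures.
From mathcomp Require Import all_boot all_algebra.
From mathcomp Require Import monoid.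
From mathcomp Require Import all_classical all_reals all_analysis.

Set Implicit Arguments.
Unset Strict Implicit.
Unset Printing Implicit Defensive.

Import GRing.Theory Num.Theory.
Local Open Scope classical_set_scope.
Local Open Scope ring_scope.

Definition finitely_generated (G : groupType) : Prop :=
  exists S : seq G,
    forall H : set G,
      (forall s, s \in S -> H s) -> H 1%g ->
      (forall x y, H x -> H y -> H (x * y)%g) ->
      (forall x, H x -> H (x^-1)%g) ->
      H = setT.

Definition amenable (R : realType) (G : groupType) : Prop :=
  exists m : set G -> R,
    [/\ (forall A, 0 <= m A),
        m setT = 1,
        (forall A B, A `&` B = set0 -> m (A `|` B) = m A + m B) &
        (forall (g : G) A, m ((fun a => (g * a)%g) @` A) = m A)].

(* The finite Gamma-sets are V_n := 'I_(k n).+1 (nonempty, as needed    *)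
(* for normalized counting measures).  The inverse limit X is realised  *)
(* as the set of compatible sequences inside the ambient product        *)
(* Y := forall n, V_n.                                                  *)

Definition seqspace (k : nat -> nat) := forall n : nat, 'I_(k n).+1.

HB.instance Definition _ k := gen_eqMixin (seqspace k).
HB.instance Definition _ k := gen_choiceMixin (seqspace k).
HB.instance Definition _ k := isPointed.Build (seqspace k) (fun n => ord0).

Definition cylinders (k : nat -> nat) : set (set (seqspace k)) :=
  fun A => exists n (v : 'I_(k n).+1), A = [set y : seqspace k | y n = v].

Notation seqmeas k := (g_sigma_algebraType (@cylinders k)).

Definition is_action (G : groupType) (T : Type) (a : G -> T -> T) : Prop :=
  (forall x, a 1%g x = x) /\ (forall g h x, a (g * h)%g x = a g (a h x)).

Definition profinite_data (G : groupType) (k : nat -> nat)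
  (act : forall n, G -> 'I_(k n).+1 -> 'I_(k n).+1)
  (p : forall n, 'I_(k n.+1).+1 -> 'I_(k n).+1) : Prop :=
  [/\ forall n, is_action (act n),
      forall n, (forall w, exists v, p n v = w) &
      forall n g v, p n (act n.+1 g v) = act n g (p n v)].

Definition invlim (k : nat -> nat) (p : forall n, 'I_(k n.+1).+1 -> 'I_(k n).+1)
  : set (seqspace k) := [set y | forall n, p n (y n.+1) = y n].

Definition seqact (G : groupType) (k : nat -> nat)
  (act : forall n, G -> 'I_(k n).+1 -> 'I_(k n).+1) (g : G) (y : seqspace k)
  : seqspace k := fun n => act n g (y n).

(** mu is the measure on X induced by the normalized counting measures on
    the V_n: it is carried by X and gives mass 1/|V_n| to each cylinder
    {x in X | x_n = v}. *)
Definition induced_measure (R : realType) (k : nat -> nat)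
  (p : forall n, 'I_(k n.+1).+1 -> 'I_(k n).+1)
  (mu : probability (seqmeas k) R) : Prop :=
  mu (invlim p) = 1%E /\
  forall n (v : 'I_(k n).+1),
    mu (invlim p `&` [set y : seqmeas k | y n = v]) = ((k n).+1%:R^-1)%:E.

Definition invlim_open (k : nat -> nat)
  (p : forall n, 'I_(k n.+1).+1 -> 'I_(k n).+1) (U : set (seqspace k)) : Prop :=
  U `<=` invlim p /\
  forall x, U x -> exists n, invlim p `&` [set y | y n = x n] `<=` U.

Section Properties.
Variables (R : realType) (G : groupType) (k : nat -> nat).
Variables (act : forall n, G -> 'I_(k n).+1 -> 'I_(k n).+1)
          (p : forall n, 'I_(k n.+1).+1 -> 'I_(k n).+1)
          (mu : probability (seqmeas k) R).

Local Notation X := (invlim p).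
Local Notation a := (seqact act).

Definition ergodic : Prop :=
  forall A : set (seqmeas k), measurable A -> A `<=` X ->
    (forall g, a g @` A = A) -> mu A = 0%E \/ mu A = 1%E.

Definition faithful : Prop :=
  forall g : G, (forall x, X x -> a g x = x) -> g = 1%g.

Definition topologically_free : Prop :=
  forall g : G, g <> 1%g ->
    forall U, invlim_open p U -> U `<=` [set x | a g x = x] -> U = set0.

Definition orbit_rel (x y : seqspace k) : Prop := exists g : G, y = a g x.

Definition hyperfinite : Prop :=
  exists (N : set (seqmeas k)) (E : nat -> seqmeas k -> seqmeas k -> Prop),
  [/\ (measurable N /\ mu N = 0%E),
      (forall m, measurable [set z : seqmeas k * seqmeas k | E m z.1 z.2]) /\
      (forall m x y, X x -> X y -> E m x y -> E m.+1 x y),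
      (forall m, [/\ forall x, X x -> E m x x,
                     forall x y, X x -> X y -> E m x y -> E m y x &
                     forall x y z, X x -> X y -> X z ->
                       E m x y -> E m y z -> E m x z]),
      (forall m x, X x -> finite_set [set y | X y /\ E m x y]) &
      (forall x y, X x -> X y -> ~ N x -> ~ N y ->
         (orbit_rel x y <-> exists m, E m x y))].

End Properties.

From HB Require Import structures.
From mathcomp Require Import all_boot all_algebra.
From mathcomp Require Import monoid.
From mathcomp Require Import all_classical all_reals all_analysis.
From mathcomp Require Import zify ring lra.

Set Implicit Arguments.
Unset Strict Implicit.
Unset Printing Implicit Defensive.

Import mathcomp.order.order.Order.TTheory GRing.Theory Num.Theory.
Local Open Scope classical_set_scope.

(* The group is C2 * C2 * C2, acting on the sequences [z] with [z j] a vertex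
   of a star graph: at level [j] a label [l] swaps the centre [0] with the leaf
   [l + 1]; a leaf it fixes is a loop, and the loops of level [j] are the
   labels of level [j + 1], which act on the remaining coordinates.  The
   generators are the three labels of level [0].  Level [n] of the profinite
   action is the product of the first [n] vertex sets, and the measure is the
   image of Lebesgue measure under the mixed-radix expansion.

   Every change of finitely many coordinates is realised by a word.  Hence the
   group is transitive on each level, which by uniqueness of measures on
   cylinders gives ergodicity, and the orbits are the classes of eventual
   equality of coordinates, which gives hyperfiniteness.  A nonempty reduced
   word either moves the first coordinate or lifts to a nonempty reduced word
   of the next level, so it moves a point of every cylinder: the action is
   topologically free, hence faithful.  Non-amenability is ping-pong. *)

(** * Free products of copies of C2 *)

Definition reduced (T : eqType) (w : seq T) : bool := sorted (fun a b => a != b) w.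

Lemma reduced_cons (T : eqType) (a : T) w :
  reduced (a :: w) = reduced w && ((w != [::]) ==> (a != head a w)).
Proof. by case: w => // b w; rewrite /reduced /= andbC. Qed.

Lemma reduced_behead (T : eqType) (w : seq T) : reduced w -> reduced (behead w).
Proof. by case: w => // a w; exact: path_sorted. Qed.

Lemma reduced_map (T U : eqType) (f : T -> U) w :
  injective f -> reduced (map f w) = reduced w.
Proof.
move=> inj_f; case: w => // a w; rewrite /reduced /= path_map.
by apply: eq_path => x y /=; rewrite inj_eq.
Qed.

Section FreeProductC2.
Variable T : choiceType.

Definition letter_mul (s : T) (w : seq T) : seq T :=
  if w is t :: w' then (if t == s then w' else s :: w) else [:: s].

Definition word_mul (u v : seq T) : seq T := foldr letter_mul v u.

Lemma reduced_letter_mul s w : reduced w -> reduced (letter_mul s w).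
Proof.
case: w => // t w; rewrite /letter_mul; case: ifP => [_|/negbT ts] h.
  exact: (reduced_behead h).
by rewrite /= eq_sym ts.
Qed.

Lemma reduced_word_mul u v : reduced v -> reduced (word_mul u v).
Proof. by elim: u => //= s u IH hv; apply: reduced_letter_mul; exact: IH. Qed.

Lemma letter_mulK s w : reduced w -> letter_mul s (letter_mul s w) = w.
Proof.
case: w => /= [|t w]; first by rewrite eqxx.
case: ifP => [/eqP ->|ts] /=; last by rewrite eqxx.
by case: w => //= b w /andP[sb _]; rewrite eq_sym (negPf sb).
Qed.

Lemma word_mulA u v w : reduced w -> word_mul (word_mul u v) w = word_mul u (word_mul v w).
Proof.
move=> hw; elim: u => //= s u <-.
case: (word_mul u v) => //= t x; case: ifP => [/eqP ->|_] //.
by rewrite letter_mulK // reduced_word_mul.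
Qed.

Lemma word_mul_rev u t : word_mul (rev u) (u ++ t) = t.
Proof.
elim: u t => //= s u IH t.
by rewrite rev_cons -cats1 /word_mul foldr_cat /= eqxx -/(word_mul _ _) IH.
Qed.

Lemma word_mul_revr u t : reduced t -> word_mul u (word_mul (rev u) t) = t.
Proof.
elim: u t => //= s u IH t ht.
rewrite rev_cons -cats1 /word_mul foldr_cat /= -/(word_mul _ _) -/(word_mul _ _).
by rewrite IH ?letter_mulK // reduced_letter_mul.
Qed.

Record freeC2 := FreeC2 { letters :> seq T; lettersP : reduced letters }.

HB.instance Definition _ := [isSub for letters].
HB.instance Definition _ := [Equality of freeC2 by <:].
HB.instance Definition _ := [Choice of freeC2 by <:].

Definition freeC2_one : freeC2 := @FreeC2 [::] erefl.
Definition freeC2_mul (u v : freeC2) : freeC2 :=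
  FreeC2 (reduced_word_mul u (lettersP v)).
Definition freeC2_inv (u : freeC2) : freeC2 :=
  FreeC2 (@reduced_word_mul (rev u) [::] erefl).

Lemma freeC2_mulA : associative freeC2_mul.
Proof. by move=> u v w; apply: val_inj; rewrite /= word_mulA // lettersP. Qed.

Lemma freeC2_mul1 : left_id freeC2_one freeC2_mul.
Proof. by move=> u; apply: val_inj. Qed.

Lemma freeC2_mulr1 : right_id freeC2_one freeC2_mul.
Proof.
move=> [u hu]; apply: val_inj => /=; elim: u hu => //= s u IH hu.
rewrite IH; last exact: (reduced_behead (w := s :: u) hu).
by case: u {IH} hu => //= t u /andP[+ _]; rewrite eq_sym => /negPf ->.
Qed.

Lemma freeC2_mulV : left_inverse freeC2_one freeC2_inv freeC2_mul.
Proof.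
move=> u; apply: val_inj => /=; rewrite word_mulA ?lettersP //=.
by have := word_mul_rev u [::]; rewrite cats0.
Qed.

Lemma freeC2_mulVr : right_inverse freeC2_one freeC2_inv freeC2_mul.
Proof. by move=> u; apply: val_inj => /=; rewrite word_mul_revr. Qed.

HB.instance Definition _ := isGroup.Build freeC2
  freeC2_mulA freeC2_mul1 freeC2_mulr1 freeC2_mulV freeC2_mulVr.

Definition gen (s : T) : freeC2 := @FreeC2 [:: s] erefl.

Lemma gen_mul (s : T) (w : freeC2) : ohead w != Some s -> letters (gen s * w)%g = s :: w.
Proof.
case: w => -[|t w] hw //= ts; rewrite /word_mul /=.
by case: (t =P s) ts => // ->; rewrite eqxx.
Qed.

End FreeProductC2.

Lemma freeC2_finitely_generated (T : finType) : finitely_generated (freeC2 T).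
Proof.
exists (map (@gen T) (enum T)) => H hS h1 hM _.
apply/seteqP; split => // -[w hw] _.
elim: w hw => [|s w IH] hw; first by have -> : FreeC2 hw = 1%g by apply: val_inj.
have hw' := reduced_behead (w := s :: w) hw.
have -> : FreeC2 hw = (gen s * FreeC2 hw')%g.
  apply: val_inj; apply/esym/(gen_mul (w := FreeC2 hw')) => /=.
  by case: w {IH hw'} hw => //= t w /andP[]; rewrite eq_sym => ts _; apply: contra ts => /eqP [->].
by apply: hM (IH hw'); apply: hS; rewrite map_f ?mem_enum.
Qed.

Lemma ohead_gen_mul (T : choiceType) (s : T) (w : freeC2 T) :
  ohead w != Some s -> ohead (gen s * w)%g = Some s.
Proof. by move=> hw; rewrite gen_mul //; case: w hw => -[|t w] //=. Qed.

Section Nonamenable.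
Local Open Scope ring_scope.

(* Ping-pong: a left-translate of the words not starting with [s] consists of
   words starting with [s], so each of these three disjoint sets would have
   mean at least 1/2. *)
Lemma freeC2_nonamenable (R : realType) (T : choiceType) (a b c : T) :
  a != b -> b != c -> a != c -> ~ amenable R (freeC2 T).
Proof.
move=> ab bc ac [mu [mu_ge0 muT muU mu_inv]].
have mu_le A B : A `<=` B -> mu A <= mu B.
  by move=> AB; rewrite -(setDUK AB) muU ?setDIK // lerDl.
have muC A : mu (~` A) = 1 - mu A.
  by rewrite -muT -(setUv A) muU ?setICr //; ring.
pose Z s := [set w : freeC2 T | ohead w = Some s].
have Z_half s : 1 / 2 <= mu (Z s).
  have : mu (~` Z s) <= mu (Z s).
    rewrite -(mu_inv (gen s)); apply: mu_le => _ [w hw <-].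
    by rewrite /Z /= ohead_gen_mul //; apply/eqP.
  rewrite muC; lra.
have Z_disj s t : s != t -> Z s `&` Z t = set0.
  move=> st; apply/seteqP; split => // w [/= hs]; rewrite /Z /= hs => -[e].
  by move: st; rewrite e eqxx.
have : mu (Z a `|` Z b `|` Z c) <= 1 by rewrite -muT; apply: mu_le.
rewrite muU; last by rewrite setIUl !Z_disj // setU0.
rewrite muU; last exact: Z_disj.
have := Z_half a; have := Z_half b; have := Z_half c; lra.
Qed.

End Nonamenable.

(** * Iterated star graphs *)

(* The star graph of level [j] has centre [0], leaves [1 .. leaves j], and
   label [l < leaves j] on the edge between [0] and [l.+1]; the loops of
   level [j] are the labels of level [j.+1]. *)
Fixpoint leaves (j : nat) : nat :=
  if j is j'.+1 then leaves j' * (leaves j').-1 else 3.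

Lemma leavesS j : leaves j.+1 = leaves j * (leaves j).-1. Proof. by []. Qed.
Arguments leaves : simpl never.

Lemma leaves_ge3 j : 3 <= leaves j.
Proof.
elim: j => // j IH; rewrite leavesS.
have := leq_mul IH (_ : 2 <= (leaves j).-1); lia.
Qed.

Definition star_move (l v : nat) : nat :=
  if v == 0 then l.+1 else if v == l.+1 then 0 else v.

Definition is_loop (l v : nat) : bool := (v != 0) && (v != l.+1).

(* The loop at leaf [v] labelled [l] is numbered [l * (leaves j - 1) + i],
   where [i] is the rank of [v - 1] among the [leaves j - 1] leaves other than
   [l.+1]. *)
Definition loop_label (j l v : nat) : nat :=
  l * (leaves j).-1 + (v.-1 - (l < v.-1)).

Definition label_loop (j c : nat) : nat * nat :=
  let l := c %/ (leaves j).-1 in let i := c %% (leaves j).-1 in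
  (l, (if i < l then i else i.+1).+1).

Lemma star_moveK l : involutive (star_move l).
Proof.
move=> v; rewrite /star_move; case: (eqVneq v 0) => [->|v0] /=; first by rewrite eqxx.
case: (eqVneq v l.+1) => [->|vl] //=.
by rewrite (negPf v0) (negPf vl).
Qed.

Lemma is_loop_star_move l v : ~~ is_loop l v -> ~~ is_loop l (star_move l v).
Proof.
rewrite /is_loop /star_move; case: (eqVneq v 0) => [->|v0] //=; first by rewrite /= eqxx.
by case: (eqVneq v l.+1).
Qed.

Lemma star_move_le j l v : l < leaves j -> v <= leaves j -> star_move l v <= leaves j.
Proof. by rewrite /star_move; case: ifP => _ //; case: ifP. Qed.

Lemma loop_label_lt j l v :
  l < leaves j -> v <= leaves j -> is_loop l v -> loop_label j l v < leaves j.+1.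
Proof.
rewrite /is_loop /loop_label => hl hv /andP[/eqP h0 /eqP h1].
have h3 := leaves_ge3 j; set M := (leaves j).-1.
have hM : leaves j = M.+1 by rewrite /M; lia.
have hr : v.-1 - (l < v.-1) < M by case: (ltnP l v.-1) => /= h; rewrite /M; lia.
rewrite leavesS hM /=.
have := leq_mul (_ : l <= M) (leqnn M); nia.
Qed.

Lemma loop_label_inj j l v l' v' :
  l < leaves j -> v <= leaves j -> is_loop l v ->
  l' < leaves j -> v' <= leaves j -> is_loop l' v' ->
  loop_label j l v = loop_label j l' v' -> l = l' /\ v = v'.
Proof.
rewrite /is_loop /loop_label => hl hv /andP[/eqP h0 /eqP h1] hl' hv'.
move=> /andP[/eqP h0' /eqP h1'] e.
have h3 := leaves_ge3 j; set M := (leaves j).-1 in e.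
have hM0 : 0 < M by rewrite /M; lia.
have hr : v.-1 - (l < v.-1) < M by case: (ltnP l v.-1) => /= h; rewrite /M; lia.
have hr' : v'.-1 - (l' < v'.-1) < M by case: (ltnP l' v'.-1) => /= h; rewrite /M; lia.
have el : l = l'.
  by have := congr1 (fun x => x %/ M) e; rewrite /= !divnMDl // !divn_small //; lia.
subst l'; split => //.
have : v.-1 - (l < v.-1) = v'.-1 - (l < v'.-1) by lia.
by case: (ltnP l v.-1); case: (ltnP l v'.-1) => /= ? ? ?; lia.
Qed.

Lemma label_loopP j c : c < leaves j.+1 ->
  let p := label_loop j c in
  [/\ p.1 < leaves j, p.2 <= leaves j, is_loop p.1 p.2 & loop_label j p.1 p.2 = c].
Proof.
move=> hc /=; have h3 := leaves_ge3 j.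
rewrite /label_loop /=; set M := (leaves j).-1.
have hM0 : 0 < M by rewrite /M; lia.
have hM : leaves j = M.+1 by rewrite /M; lia.
move: hc; rewrite leavesS hM /= => hc.
have hl : c %/ M < M.+1 by rewrite ltn_divLR.
have hr : c %% M < M by rewrite ltn_mod.
have ec := divn_eq c M.
split => //.
- by case: ifP => _; lia.
- by rewrite /is_loop; case: ifP => h /=; apply/eqP; lia.
- rewrite /loop_label hM /=; case: ifP => h /=.
    by rewrite (_ : (c %/ M < c %% M) = false) ?subn0; [lia | apply/negbTE; rewrite -leqNgt ltnW].
  by rewrite (_ : (c %/ M < (c %% M).+1) = true) ?subn1 /=; [lia | rewrite ltnS leqNgt h].
Qed.

(* Points of the ambient space are sequences [z : nat -> nat]; in a point
   based at level [j], the coordinate [z d] is a vertex of the star of level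
   [j + d]. *)
Definition bounded (j : nat) (z : nat -> nat) := forall d, z d <= leaves (j + d).

Definition stail (z : nat -> nat) : nat -> nat := fun d => z d.+1.
Definition scons (v : nat) (z : nat -> nat) : nat -> nat :=
  fun d => if d is d'.+1 then z d' else v.

Lemma scons_stail z : scons (z 0) (stail z) = z.
Proof. by apply: funext => -[|d]. Qed.

Lemma scons_inj v z v' z' : scons v z = scons v' z' -> v = v' /\ z = z'.
Proof. by move=> e; split; [exact: (congr1 (fun f => f 0) e) | exact: (congr1 stail e)]. Qed.

Lemma bounded_stail j z : bounded j z -> bounded j.+1 (stail z).
Proof. by move=> h d; rewrite /stail addSnnS. Qed.

Lemma bounded_scons j v z : v <= leaves j -> bounded j.+1 z -> bounded j (scons v z).
Proof. by move=> hv hz [|d] /=; rewrite ?addn0 // -addSnnS. Qed.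

Lemma bounded_head j z : bounded j z -> z 0 <= leaves j.
Proof. by move/(_ 0); rewrite addn0. Qed.

(* A label moves the first coordinate along its edge, or, at a loop, fixes it
   and acts on the tail by the corresponding label of the next level. *)
Fixpoint label_act_at (d j l : nat) (z : nat -> nat) {struct d} : nat :=
  if is_loop l (z 0) then
    (if d is d'.+1 then label_act_at d' j.+1 (loop_label j l (z 0)) (stail z) else z 0)
  else (if d is d'.+1 then z d else star_move l (z 0)).

Definition label_act (j l : nat) (z : nat -> nat) : nat -> nat :=
  fun d => label_act_at d j l z.

Definition word_act (j : nat) (w : seq nat) (z : nat -> nat) := foldr (label_act j) z w.

Lemma label_act_scons j l v z :
  label_act j l (scons v z) =
  if is_loop l v then scons v (label_act j.+1 (loop_label j l v) z)
  else scons (star_move l v) z.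
Proof. by apply: funext => -[|d] /=; rewrite /label_act /=; case: ifP. Qed.

Lemma stail_label_act j l z :
  is_loop l (z 0) -> stail (label_act j l z) = label_act j.+1 (loop_label j l (z 0)) (stail z).
Proof. by move=> h; apply: funext => d; rewrite /stail /label_act /= h. Qed.

Lemma label_actK j l : involutive (label_act j l).
Proof.
move=> z; apply: funext => d; rewrite {1}/label_act.
elim: d j l z => [|d IH] j l z /=; rewrite /label_act /=.
  case h: (is_loop l (z 0)); first by rewrite h.
  by rewrite (negPf (is_loop_star_move (negbT h))) star_moveK.
case h: (is_loop l (z 0)); first by rewrite h -/(label_act _ _ _) stail_label_act // IH.
by rewrite (negPf (is_loop_star_move (negbT h))).
Qed.

Lemma label_act_bounded j l z : bounded j z -> l < leaves j -> bounded j (label_act j l z).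
Proof.
move=> hz hl d; rewrite /label_act.
elim: d j l z hz hl => [|d IH] j l z hz hl /=.
  by rewrite addn0; case: ifP => _; [exact: bounded_head | exact: star_move_le (bounded_head hz)].
case: ifP => h; last exact: hz.
rewrite -addSnnS; apply: IH; first exact: bounded_stail.
exact: loop_label_lt (bounded_head hz) h.
Qed.

Lemma word_act_bounded j w z :
  bounded j z -> all (fun l => l < leaves j) w -> bounded j (word_act j w z).
Proof.
by elim: w => //= l w IH hz /andP[hl hw]; apply: label_act_bounded => //; exact: IH.
Qed.

Lemma label_act_at_prefix d j l z z' : (forall e, e <= d -> z e = z' e) ->
  label_act_at d j l z = label_act_at d j l z'.
Proof.
elim: d j l z z' => [|d IH] j l z z' h /=; first by rewrite h.
rewrite (h 0) //; case: ifP => _; last by rewrite h.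
by apply: IH => e he; rewrite /stail h.
Qed.

Lemma word_act_prefix n j w z z' : (forall e, e < n -> z e = z' e) ->
  forall e, e < n -> word_act j w z e = word_act j w z' e.
Proof.
move=> h; elim: w => //= l w IH e he.
by apply: label_act_at_prefix => e' he'; apply: IH; lia.
Qed.

Lemma label_act_eq_beyond d j l z : label_act j l z d <> z d ->
  forall e, d < e -> label_act j l z e = z e.
Proof.
rewrite /label_act; elim: d j l z => [|d IH] j l z /=.
  by case: ifP => // h _ [|e] //= _; rewrite h.
by case: ifP => h // hd [|e] //= he; rewrite h; exact: IH.
Qed.

Lemma label_act_eventually_eq j l z :
  exists M, forall d, M <= d -> label_act j l z d = z d.
Proof.
have [[d hd]|h] := pselect (exists d, label_act j l z d <> z d).
  by exists d.+1 => e he; apply: (label_act_eq_beyond hd).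
by exists 0 => d _; apply: contrapT => hd; apply: h; exists d.
Qed.

Lemma word_act_eventually_eq j w z :
  exists M, forall d, M <= d -> word_act j w z d = z d.
Proof.
elim: w => [|l w [M1 h1]] /=; first by exists 0.
have [M2 h2] := label_act_eventually_eq j l (word_act j w z).
by exists (maxn M1 M2) => d hd; rewrite h2 ?h1 //; lia.
Qed.

(* The effect of a word on the first coordinate: the state is the current
   vertex together with the word of next-level labels (the loops met so far)
   that the word applies to the tail. *)
Definition walk_step (j l : nat) (p : nat * seq nat) : nat * seq nat :=
  if is_loop l p.1 then (p.1, loop_label j l p.1 :: p.2) else (star_move l p.1, p.2).

Definition walk (j : nat) (w : seq nat) (p : nat * seq nat) := foldr (walk_step j) p w.

Lemma walk_cat j w1 w2 p : walk j (w1 ++ w2) p = walk j w1 (walk j w2 p).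
Proof. exact: foldr_cat. Qed.

Lemma word_act_scons j w v s z :
  word_act j w (scons v (word_act j.+1 s z)) =
  scons (walk j w (v, s)).1 (word_act j.+1 (walk j w (v, s)).2 z).
Proof.
elim: w => //= l w ->; rewrite label_act_scons /walk_step.
by case: ifP.
Qed.

Lemma word_act_scons0 j w v z :
  word_act j w (scons v z) =
  scons (walk j w (v, [::])).1 (word_act j.+1 (walk j w (v, [::])).2 z).
Proof. exact: (word_act_scons j w v [::] z). Qed.

Lemma walk_bounded j w v : all (fun l => l < leaves j) w -> v <= leaves j ->
  (walk j w (v, [::])).1 <= leaves j /\ all (fun c => c < leaves j.+1) (walk j w (v, [::])).2.
Proof.
elim: w => //= l w IH /andP[hl hw] hv; have [h1 h2] := IH hw hv.
rewrite /walk_step; case: ifP => h /=; last by split => //; exact: star_move_le.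
by rewrite h2 andbT loop_label_lt.
Qed.

(* How the last letter [h] of a nonempty reduced word produced the state [p]
   reached from [v]: either it made the loop that heads [p.2], or it moved
   the vertex along its edge.  This is what keeps the lifted word reduced. *)
Definition walk_inv (j h v : nat) (p : nat * seq nat) : Prop :=
  (p.2 = [::] -> [/\ p.1 <> v, p.1 = 0 -> v = h.+1 & p.1 <> 0 -> p.1 = h.+1]) /\
  (forall c s, p.2 = c :: s -> exists l0 u,
     [/\ is_loop l0 u, l0 < leaves j, u <= leaves j & c = loop_label j l0 u] /\
     [/\ p.1 = u -> h = l0, p.1 = 0 -> u = h.+1 & p.1 <> u -> p.1 <> 0 -> p.1 = h.+1]).

Lemma walk_inv1 j l v : l < leaves j -> v <= leaves j ->
  walk_inv j l v (walk_step j l (v, [::])).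
Proof.
rewrite /walk_step /= => hl hv; case: ifP => hlv; split => //=.
  move=> c s [<- _]; exists l, v; split => //.
  split; [by [] | move=> v0 | by move=> /(_ erefl)].
  by move: hlv; rewrite v0.
move=> _; move/negbT: hlv; rewrite /is_loop negb_and !negbK => /orP[] /eqP ->.
  by rewrite /star_move eqxx.
by rewrite /star_move /= eqxx.
Qed.

Lemma walk_inv_step j l h v p : l < leaves j -> p.1 <= leaves j -> l != h ->
  reduced p.2 -> walk_inv j h v p ->
  reduced (walk_step j l p).2 /\ walk_inv j l v (walk_step j l p).
Proof.
case: p => p1 s hl hp1 lh hs [inv_nil inv_cons]; rewrite /= in hp1 inv_nil inv_cons.
rewrite /walk_step; case: ifP => hloop.
  have p10 : p1 <> 0 by move=> e; move: hloop; rewrite e.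
  have red : reduced (loop_label j l p1 :: s).
    rewrite reduced_cons hs /=; case E: s => [|c s'] //=.
    have [l0 [u [[lu l0j uj ->] [e1 _ _]]]] := inv_cons c s' E.
    apply: contra lh => /eqP /(loop_label_inj hl hp1 hloop l0j uj lu) [-> eu].
    by rewrite (e1 eu).
  split => //; split => // c s' [<- _]; exists l, p1; split => //.
split => //.
have [] : p1 = 0 \/ p1 = l.+1.
  by move/negbT: hloop; rewrite /is_loop negb_and !negbK => /orP[/eqP|/eqP]; tauto.
all: move=> ep; subst p1.
- rewrite /star_move eqxx; split => /=.
    move=> E; have [nv v0 _] := inv_nil E; split => //.
    by rewrite (v0 erefl) => -[] /eqP; rewrite (negPf lh).
  move=> c s' E; have [l0 [u [hu [_ e2 _]]]] := inv_cons c s' E.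
  exists l0, u; split => //; split => // e.
  by move: lh; rewrite (e2 erefl) in e; case: e => ->; rewrite eqxx.
- rewrite /star_move /= eqxx; split => /=.
    by move=> E; have [_ _ e] := inv_nil E; move: lh; case: (e ltac:(done)) => ->; rewrite eqxx.
  move=> c s' E; have [l0 [u [[lu l0j uj ec] [_ _ e3]]]] := inv_cons c s' E.
  have u0 : u <> 0 by move=> e; move: lu; rewrite e.
  exists l0, u; split => //.
  split; [by move/esym/u0 | move=> _ | by move=> _ /(_ erefl)].
  case: (eqVneq l.+1 u) => [//|nu].
  by move: lh; case: (e3 (elimN eqP nu) ltac:(done)) => ->; rewrite eqxx.
Qed.

Lemma walk_reduced j w v : reduced w -> all (fun l => l < leaves j) w -> v <= leaves j ->
  reduced (walk j w (v, [::])).2 /\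
  (w != [::] -> walk_inv j (head 0 w) v (walk j w (v, [::]))).
Proof.
elim: w => // l w IH; rewrite reduced_cons => /andP[hw hlw] /andP[hl hall] hv.
have [red_w inv_w] := IH hw hall hv; rewrite /=.
case: (eqVneq w [::]) => [-> | wn].
  split => [|_]; last exact: walk_inv1.
  by rewrite /walk /= /walk_step; case: ifP.
have hlh : l != head 0 w by case: w wn hlw {IH hw hall red_w inv_w}.
have [red inv] := walk_inv_step hl (proj1 (walk_bounded hall hv)) hlh red_w (inv_w wn).
by split => // _.
Qed.

Lemma walk_moved j w v : reduced w -> all (fun l => l < leaves j) w -> v <= leaves j ->
  w != [::] -> (walk j w (v, [::])).2 = [::] -> (walk j w (v, [::])).1 <> v.
Proof. by move=> hw hall hv wn E; have [_ /(_ wn) [/(_ E) []]] := walk_reduced hw hall hv. Qed.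

Lemma walk_size j w p : size (walk j w p).2 <= size w + size p.2.
Proof. by elim: w => //= l w IH; rewrite /walk_step; case: ifP => _ /=; lia. Qed.

(* The centre is never a loop, so from [0] the first letter read emits nothing. *)
Lemma walk_size0 j w : w != [::] -> size (walk j w (0, [::])).2 < size w.
Proof.
case/lastP: w => // w l _; rewrite -cats1 walk_cat size_cat /= addn1 ltnS.
by have := walk_size j w (l.+1, [::]); rewrite addn0.
Qed.

Lemma word_act_moves j w : w != [::] -> reduced w ->
  all (fun l => l < leaves j) w -> exists z, bounded j z /\ word_act j w z <> z.
Proof.
have [L] := ubnP (size w); elim: L j w => // L IH j w /ltnSE hs wn hr ha.
have [red_s _] := walk_reduced hr ha (leq0n (leaves j)).
have [_ all_s] := walk_bounded ha (leq0n (leaves j)).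
case: (eqVneq (walk j w (0, [::])).1 0) => e.
  have sn : (walk j w (0, [::])).2 != [::].
    by apply/eqP => /(walk_moved hr ha (leq0n _) wn).
  have [z' [bz' hz']] := IH j.+1 _ (leq_trans (walk_size0 j wn) hs) sn red_s all_s.
  exists (scons 0 z'); split; first exact: bounded_scons.
  by rewrite word_act_scons0 e => /scons_inj [_].
exists (scons 0 (fun _ => 0)); split; first exact: bounded_scons.
by rewrite word_act_scons0 => /scons_inj [/eqP]; rewrite (negPf e).
Qed.

Lemma word_act_moves_near n j u w : bounded j u -> w != [::] -> reduced w ->
  all (fun l => l < leaves j) w ->
  exists z, [/\ bounded j z, forall d, d < n -> z d = u d & word_act j w z <> z].
Proof.
elim: n j u w => [|n IH] j u w hu wn hr ha.
  by have [z [? ?]] := word_act_moves wn hr ha; exists z; split.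
have hv := bounded_head hu.
have [red_s _] := walk_reduced hr ha hv.
have [_ all_s] := walk_bounded ha hv.
case: (eqVneq (walk j w (u 0, [::])).1 (u 0)) => e.
  have sn : (walk j w (u 0, [::])).2 != [::] by apply/eqP => /(walk_moved hr ha hv wn).
  have [z' [bz' agree hz']] := IH j.+1 (stail u) _ (bounded_stail hu) sn red_s all_s.
  exists (scons (u 0) z'); split; first exact: bounded_scons.
    by case=> [|d] //= hd; rewrite agree.
  by rewrite word_act_scons0 e => /scons_inj [_].
exists u; split => //.
by rewrite -{1 2}(scons_stail u) word_act_scons0 => /scons_inj [/eqP]; rewrite (negPf e).
Qed.

(* Through the centre: [a - 1] moves [a] to [0], then [b - 1] moves [0] to [b]. *)
Definition star_path (a b : nat) : seq nat :=
  (if b is b'.+1 then [:: b'] else [::]) ++ (if a is a'.+1 then [:: a'] else [::]).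

Lemma walk_star_path j a b s : walk j (star_path a b) (a, s) = (b, s).
Proof.
by case: a => [|a]; case: b => [|b] //=; rewrite /walk_step /is_loop /star_move /= ?eqxx.
Qed.

Lemma star_path_bounded j a b : a <= leaves j -> b <= leaves j ->
  all (fun l => l < leaves j) (star_path a b).
Proof. by case: a => [|a]; case: b => [|b] //= ? ?; rewrite ?andbT //; apply/andP. Qed.

(* A word of level [j] that returns to [a] after emitting the label [c] of level
   [j + 1]: walk to the loop [c], turn around it, and walk back. *)
Definition lift_label (j a c : nat) : seq nat :=
  let p := label_loop j c in star_path p.2 a ++ p.1 :: star_path a p.2.

Definition lift_word (j a : nat) (w : seq nat) : seq nat :=
  flatten (map (lift_label j a) w).

Lemma walk_lift_label j a c s : c < leaves j.+1 ->
  walk j (lift_label j a c) (a, s) = (a, c :: s).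
Proof.
move=> /label_loopP; rewrite /lift_label; case: (label_loop j c) => l v /= [_ _ hlv <-].
by rewrite walk_cat /= walk_star_path /walk_step /= hlv walk_star_path.
Qed.

Lemma lift_label_bounded j a c : c < leaves j.+1 -> a <= leaves j ->
  all (fun l => l < leaves j) (lift_label j a c).
Proof.
move=> /label_loopP; rewrite /lift_label; case: (label_loop j c) => l v /= [hl hv _ _] ha.
by rewrite all_cat /= !star_path_bounded // hl.
Qed.

Lemma walk_lift_word j a w s : all (fun c => c < leaves j.+1) w ->
  walk j (lift_word j a w) (a, s) = (a, w ++ s).
Proof.
elim: w => //= c w IH /andP[hc hw].
by rewrite /lift_word /= -/(lift_word j a w) walk_cat IH // walk_lift_label.
Qed.

Lemma lift_word_bounded j a w : all (fun c => c < leaves j.+1) w -> a <= leaves j ->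
  all (fun l => l < leaves j) (lift_word j a w).
Proof.
elim: w => //= c w IH /andP[hc hw] ha.
by rewrite /lift_word /= -/(lift_word j a w) all_cat lift_label_bounded // IH.
Qed.

Definition splice (n : nat) (u z : nat -> nat) : nat -> nat :=
  fun d => if d < n then u d else z d.

Lemma word_act_splice n j z u : bounded j z -> bounded j u ->
  exists w, all (fun l => l < leaves j) w /\ word_act j w z = splice n u z.
Proof.
elim: n j z u => [|n IH] j z u hz hu; first by exists [::]; split => //; apply: funext.
have [w [hw e]] := IH j.+1 (stail z) (stail u) (bounded_stail hz) (bounded_stail hu).
have hz0 := bounded_head hz; have hu0 := bounded_head hu.
exists (star_path (z 0) (u 0) ++ lift_word j (z 0) w); split.
  by rewrite all_cat star_path_bounded // lift_word_bounded.
have -> : z = scons (z 0) (word_act j.+1 [::] (stail z)) by rewrite scons_stail.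
rewrite word_act_scons walk_cat walk_lift_word // walk_star_path cats0 /= e.
by apply: funext => -[|d].
Qed.

(** * The profinite action *)

Definition verts (j : nat) : nat := (leaves j).+1.

(* Level [n] is the product of the first [n] vertex sets, encoded in mixed
   radix with the last coordinate as least significant digit. *)
Fixpoint level_card (n : nat) : nat :=
  if n is n'.+1 then level_card n' * verts n' else 1.

Fixpoint enc (n : nat) (z : nat -> nat) : nat :=
  if n is n'.+1 then enc n' z * verts n' + z n' else 0.

Fixpoint dec (n v : nat) : nat -> nat :=
  if n is n'.+1 then fun i => if i < n' then dec n' (v %/ verts n') i
                              else if i == n' then v %% verts n' else 0
  else fun _ => 0.

Lemma level_card_gt0 n : 0 < level_card n.
Proof. by elim: n => //= n IH; rewrite muln_gt0 IH. Qed.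

Lemma enc_lt n z : bounded 0 z -> enc n z < level_card n.
Proof.
elim: n => //= n IH hz; have := IH hz; have := hz n; rewrite add0n /verts.
have := level_card_gt0 n; nia.
Qed.

Lemma enc_prefix n z z' : (forall i, i < n -> z i = z' i) -> enc n z = enc n z'.
Proof. by elim: n => //= n IH h; rewrite IH ?h // => i hi; apply: h; lia. Qed.

Lemma dec_bounded n v : bounded 0 (dec n v).
Proof.
move=> i; rewrite add0n; elim: n v => //= n IH v; case: ifP => _ //.
by case: ifP => // /eqP ->; rewrite -ltnS; apply: ltn_pmod.
Qed.

Lemma decK n v : v < level_card n -> enc n (dec n v) = v.
Proof.
elim: n v => [|n IH] v /=; first by case: v.
move=> hv; rewrite ltnn eqxx.
rewrite (@enc_prefix n _ (dec n (v %/ verts n))) => [|i /= ->] //.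
by rewrite IH -?divn_eq // ltn_divLR.
Qed.

Lemma encK n z : bounded 0 z -> forall i, i < n -> dec n (enc n z) i = z i.
Proof.
elim: n => //= n IH hz i hi.
have hzn : z n < verts n by have := hz n; rewrite add0n.
have -> : (enc n z * verts n + z n) %/ verts n = enc n z by rewrite divnMDl // divn_small ?addn0.
case: ifP => hin; first exact: IH.
have -> : i = n by lia.
by rewrite eqxx modnMDl modn_small.
Qed.

Lemma enc_divS n z : bounded 0 z -> enc n.+1 z %/ verts n = enc n z.
Proof. by move=> hz /=; rewrite divnMDl // divn_small ?addn0 // ltnS; exact: hz. Qed.

Notation Gamma := (freeC2 'I_3).

Definition gletters (g : Gamma) : seq nat := map val (letters g).

Definition gact (g : Gamma) (z : nat -> nat) : nat -> nat := word_act 0 (gletters g) z.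

Lemma gletters_bounded g : all (fun l => l < leaves 0) (gletters g).
Proof. by rewrite /gletters all_map; apply/allP => x _ /=; exact: ltn_ord. Qed.

Lemma gact_mul g h z : gact (g * h)%g z = gact g (gact h z).
Proof.
rewrite /gact /gletters /=; case: g => u _ /=; rewrite /word_mul.
elim: u => //= s u <-; case: (foldr _ _ _) => //= t w.
by case: ifP => [/eqP -> | _] //=; rewrite label_actK.
Qed.

Lemma gact_bounded g z : bounded 0 z -> bounded 0 (gact g z).
Proof. by move=> hz; apply: word_act_bounded => //; exact: gletters_bounded. Qed.

Fixpoint gword (w : seq nat) : Gamma :=
  if w is l :: w' then (gen (inord l) * gword w')%g else 1%g.

Lemma gact_gword w z : all (fun l => l < leaves 0) w -> gact (gword w) z = word_act 0 w z.
Proof.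
elim: w => //= l w IH /andP[hl hw]; rewrite gact_mul IH //.
by rewrite /gact /gletters /= inordK.
Qed.

Definition kmax (n : nat) : nat := (level_card n).-1.

Lemma kmaxS n : (kmax n).+1 = level_card n.
Proof. by rewrite /kmax prednK // level_card_gt0. Qed.

Lemma enc_gact_lt n g v : enc n (gact g (dec n v)) < (kmax n).+1.
Proof. by rewrite kmaxS; apply/enc_lt/gact_bounded/dec_bounded. Qed.

Definition level_act (n : nat) (g : Gamma) (v : 'I_(kmax n).+1) : 'I_(kmax n).+1 :=
  Ordinal (enc_gact_lt n g v).
Arguments level_act : clear implicits.

Lemma level_proj_lt n x : x < (kmax n.+1).+1 -> x %/ verts n < (kmax n).+1.
Proof. by rewrite !kmaxS ltn_divLR. Qed.

Definition level_proj (n : nat) (v : 'I_(kmax n.+1).+1) : 'I_(kmax n).+1 :=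
  Ordinal (level_proj_lt (ltn_ord v)).
Arguments level_proj : clear implicits.

Lemma level_act1 n (v : 'I_(kmax n).+1) : level_act n 1%g v = v.
Proof. by apply: val_inj; rewrite /= decK // -kmaxS. Qed.

Lemma level_actM n g h (v : 'I_(kmax n).+1) :
  level_act n (g * h)%g v = level_act n g (level_act n h v).
Proof.
apply: val_inj => /=; rewrite gact_mul; apply: enc_prefix.
by apply: word_act_prefix => e he; rewrite encK //; exact/gact_bounded/dec_bounded.
Qed.

Lemma level_proj_surj n (w : 'I_(kmax n).+1) : exists v, level_proj n v = w.
Proof.
have hw : (w : nat) < level_card n by rewrite -kmaxS.
have h : w * verts n < (kmax n.+1).+1 by rewrite [X in _ < X]kmaxS /= ltn_pmul2r.
by exists (Ordinal h); apply: val_inj; rewrite /= mulnK.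
Qed.

Lemma level_proj_act n g v : level_proj n (level_act n.+1 g v) = level_act n g (level_proj n v).
Proof.
apply: val_inj; rewrite /= enc_divS; last exact: gact_bounded (dec_bounded n.+1 v).
by apply: enc_prefix; apply: word_act_prefix => e he /=; rewrite he.
Qed.

Lemma level_profinite_data : profinite_data level_act level_proj.
Proof.
split => [n | |]; last exact: level_proj_act; last exact: level_proj_surj.
by split; [exact: level_act1 | exact: level_actM].
Qed.

Notation X := (invlim level_proj).
Notation aseq := (seqact level_act).

Definition coords (y : seqspace kmax) : nat -> nat := fun i => y i.+1 %% verts i.
Definition of_coords (z : nat -> nat) : seqspace kmax := fun n => inord (enc n z).

Lemma coords_bounded y : bounded 0 (coords y).
Proof. by move=> d; rewrite add0n /coords -ltnS; apply: ltn_pmod. Qed.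

Lemma invlim_enc y : X y -> forall n, y n = enc n (coords y) :> nat.
Proof.
move=> hX; elim=> [|n IH] /=; first by case: (y 0) => -[].
by rewrite -IH -(congr1 val (hX n)) /coords -divn_eq.
Qed.

Lemma of_coordsE z n : bounded 0 z -> of_coords z n = enc n z :> nat.
Proof. by move=> hz; rewrite /of_coords inordK // kmaxS; exact: enc_lt. Qed.

Lemma of_coords_invlim z : bounded 0 z -> X (of_coords z).
Proof. by move=> hz n; apply: ord_inj; rewrite /= !of_coordsE // enc_divS. Qed.

Lemma of_coordsK z : bounded 0 z -> coords (of_coords z) = z.
Proof.
move=> hz; apply: funext => i.
by rewrite /coords of_coordsE //= modnMDl modn_small // ltnS; exact: hz.
Qed.

Lemma coordsK y : X y -> of_coords (coords y) = y.
Proof.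
move=> hX; apply: functional_extensionality_dep => n; apply: ord_inj.
by rewrite of_coordsE ?(invlim_enc hX) //; exact: coords_bounded.
Qed.

Lemma of_coords_inj z z' : bounded 0 z -> bounded 0 z' -> of_coords z = of_coords z' -> z = z'.
Proof. by move=> hz hz' e; rewrite -(of_coordsK hz) -(of_coordsK hz') e. Qed.

Lemma aseq_of_coords g z : bounded 0 z -> aseq g (of_coords z) = of_coords (gact g z).
Proof.
move=> hz; apply: functional_extensionality_dep => n; apply: ord_inj.
rewrite /seqact /= !of_coordsE //; last exact: gact_bounded.
by apply: enc_prefix; apply: word_act_prefix => e he; rewrite encK.
Qed.

Lemma aseqE g y : X y -> aseq g y = of_coords (gact g (coords y)).
Proof. by move=> hX; rewrite -{1}(coordsK hX) aseq_of_coords //; exact: coords_bounded. Qed.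

Lemma aseq_invlim g y : X y -> X (aseq g y).
Proof. by move=> hX; rewrite aseqE //; apply/of_coords_invlim/gact_bounded/coords_bounded. Qed.

Lemma coords_aseq g y : X y -> coords (aseq g y) = gact g (coords y).
Proof. by move=> hX; rewrite aseqE // of_coordsK //; apply/gact_bounded/coords_bounded. Qed.

Definition tail_eq (q : nat) (x y : seqspace kmax) : Prop :=
  forall i, q <= i -> coords x i = coords y i.

Lemma orbit_rel_tail_eq x y : X x -> X y ->
  (orbit_rel level_act x y <-> exists q, tail_eq q x y).
Proof.
move=> hx hy; split.
  move=> [g ->]; have [M hM] := word_act_eventually_eq 0 (gletters g) (coords x).
  by exists M => i hi; rewrite coords_aseq // /gact hM.
move=> [q hq]; have [w [hw e]] := word_act_splice q (coords_bounded x) (coords_bounded y).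
exists (gword w); rewrite aseqE // gact_gword // e -[LHS](coordsK hy); congr of_coords.
by apply: funext => d; rewrite /splice; case: ltnP => // /hq.
Qed.

Lemma level_topologically_free : topologically_free level_act level_proj.
Proof.
move=> g g1 U [UX hU] Ufix; apply/seteqP; split => // x Ux; exfalso.
have [n hn] := hU x Ux; have hX := UX x Ux.
have gn : gletters g != [::].
  apply: contra_notN g1 => /eqP /(congr1 size); rewrite size_map => /size0nil e.
  exact: val_inj.
have gr : reduced (gletters g) by rewrite /gletters reduced_map ?lettersP //; exact: val_inj.
have [z [bz agree hz]] := word_act_moves_near n (coords_bounded x) gn gr (gletters_bounded g).
have Uz : U (of_coords z).
  apply: hn; split; first exact: of_coords_invlim.
  by apply: ord_inj; rewrite of_coordsE // (invlim_enc hX); apply: enc_prefix.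
have := Ufix _ Uz; rewrite /= aseq_of_coords // => /of_coords_inj.
by move=> /(_ (gact_bounded g bz) bz).
Qed.

Lemma level_faithful : faithful level_act level_proj.
Proof.
move=> g hg; apply: contrapT => g1.
have hX0 : X (of_coords (fun _ => 0)) by apply: of_coords_invlim.
suff : X = set0 by move=> e; rewrite e in hX0.
apply: (level_topologically_free g1); last exact: hg.
by split => // x _; exists 0 => y [].
Qed.

(** * The invariant probability measure *)

Notation Y := (seqmeas kmax).

Definition cyl n (v : 'I_(kmax n).+1) : set Y := [set y : Y | y n = v].
Arguments cyl : clear implicits.

Lemma cyl_measurable n v : measurable (cyl n v).
Proof. by apply: sub_sigma_algebra; exists n, v. Qed.

Lemma coordinate_measurable n (P : 'I_(kmax n).+1 -> Prop) :
  measurable [set y : Y | P (y n)].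
Proof.
have -> : [set y : Y | P (y n)] = \bigcup_(v in P) cyl n v.
  by apply/seteqP; split => [y hy|y [v hv hyv]]; [exists (y n) | rewrite /= hyv].
apply: fin_bigcup_measurable; first exact: finite_finset.
by move=> v _; exact: cyl_measurable.
Qed.

Section DigitMeasure.
Variable R : realType.
Import Num.Def.
Local Open Scope ring_scope.

(* [t] in [[0, 1[] is sent to its expansion in the mixed radix given by the
   vertex counts; points outside [[0, 1[] go to an arbitrary point of [X]. *)
Definition digits (t : R) : Y :=
  if 0 <= t < 1 then fun n => inord (truncn (t * (level_card n)%:R))
  else of_coords (fun _ => 0).

Lemma level_card_gt0R n : 0 < (level_card n)%:R :> R.
Proof. by rewrite ltr0n level_card_gt0. Qed.

Lemma digitsE t n : 0 <= t < 1 -> digits t n = truncn (t * (level_card n)%:R) :> nat.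
Proof.
move=> /[dup] h /andP[t0 t1]; rewrite /digits h inordK // kmaxS.
by rewrite truncn_lt_nat ?mulr_ge0 // gtr_pMl ?level_card_gt0R.
Qed.

Lemma digits_invlim t : X (digits t).
Proof.
case: (boolP (0 <= t < 1)) => h; last by rewrite /digits (negPf h); apply: of_coords_invlim.
move=> n; apply: ord_inj; rewrite /= !digitsE //.
have /andP[t0 _] := h; set x := t * (level_card n)%:R.
have x0 : 0 <= x by rewrite mulr_ge0.
have -> : t * (level_card n.+1)%:R = x * (verts n)%:R by rewrite /x /= natrM mulrA.
have [qx xq] := andP (truncn_itv x0).
apply/eqP; rewrite eqn_leq; apply/andP; split.
  rewrite -ltnS ltn_divLR // truncn_lt_nat ?mulr_ge0 //.
  by rewrite natrM ltr_pM2r // ltr0n.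
rewrite leq_divRL // truncn_ge_nat ?mulr_ge0 //.
by rewrite natrM ler_pM2r // ltr0n.
Qed.

Definition I01 : set R := [set` `[0, 1[%R].

Lemma I01E t : I01 t = (0 <= t < 1).
Proof. by rewrite /I01 /= in_itv. Qed.

Lemma digits_preimage n v : digits @^-1` (cyl n v) =
  [set` `[v%:R / (level_card n)%:R, v.+1%:R / (level_card n)%:R[%R]
  `|` [set t | ~ I01 t /\ of_coords (fun _ => 0) n = v].
Proof.
have Np := level_card_gt0R n.
have hv : (v < level_card n)%N by rewrite -kmaxS.
apply/seteqP; split => t; rewrite /= I01E.
  case: (boolP (0 <= t < 1)) => h e; last by right; rewrite -e /digits (negPf h).
  left; move/esym/eqP: (digitsE n h); rewrite e.
  have [t0 _] := andP h.
  rewrite truncn_eq ?mulr_ge0 // in_itv /= => /andP[a b].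
  by rewrite ler_pdivrMr // ltr_pdivlMr // a b.
rewrite in_itv /=; case=> [/andP[a b]|[h e]]; last by rewrite /digits (negPf (introN idP h)).
have t0 : 0 <= t by apply: le_trans a; rewrite divr_ge0.
have t1 : t < 1 by apply: (lt_le_trans b); rewrite ler_pdivrMr // mul1r ler_nat.
have h : 0 <= t < 1 by rewrite t0 t1.
apply: ord_inj; rewrite digitsE //; apply: truncn_def.
by rewrite -ler_pdivrMr // -ltr_pdivlMr // a b.
Qed.

Lemma I01_measurable : measurable I01.
Proof. exact: measurable_itv. Qed.

Lemma digits_measurable : measurable_fun setT digits.
Proof.
apply: (@measurability _ _ _ _ setT digits (@cylinders kmax)) => //.
move=> _ [A [n [v ->]] <-]; rewrite setTI.
rewrite -[[set y | y n = v]]/(cyl n v) digits_preimage.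
apply: measurableU; first exact: measurable_itv.
apply: measurableI; first by apply: measurableC; exact: I01_measurable.
have [e|e] := pselect (of_coords (fun=> 0) n = v).
  by apply: (eq_ind setT measurable measurableT); apply/seteqP; split.
by apply: (eq_ind set0 measurable measurable0); apply/seteqP; split.
Qed.

Definition digit_measure : set Y -> \bar R :=
  pushforward (mrestr lebesgue_measure I01_measurable) digits.

Let digit_measure0 : digit_measure set0 = 0%E.
Proof.
by rewrite /digit_measure; apply: measure0; exact: digits_measurable.
Qed.

Let digit_measure_ge0 A : (0 <= digit_measure A)%E.
Proof.
by rewrite /digit_measure; apply: measure_ge0; exact: digits_measurable.
Qed.

Let digit_measure_sigma : semi_sigma_additive digit_measure.
Proof.
by rewrite /digit_measure; apply: measure_semi_sigma_additive; exact: digits_measurable.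
Qed.

HB.instance Definition _ := isMeasure.Build _ _ _ digit_measure
  digit_measure0 digit_measure_ge0 digit_measure_sigma.

Let digit_measureT : digit_measure setT = 1%E.
Proof.
rewrite /digit_measure /pushforward /mrestr preimage_setT setTI.
by rewrite lebesgue_measure_itv /= lte_fin ltr01 sube0.
Qed.

HB.instance Definition _ := Measure_isProbability.Build _ _ _ digit_measure digit_measureT.

Lemma digit_measure_invlim (B : set Y) : digit_measure B = digit_measure (B `&` X).
Proof.
rewrite /digit_measure /pushforward /mrestr preimage_setI.
rewrite (_ : digits @^-1` X = setT) ?setIT //.
by apply/seteqP; split => // t _; exact: digits_invlim.
Qed.

Lemma digit_measure_cyl n v : digit_measure (X `&` cyl n v) = ((kmax n).+1%:R^-1)%:E.
Proof.
have Np := level_card_gt0R n.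
have hv : (v < level_card n)%N by rewrite -kmaxS.
rewrite setIC -digit_measure_invlim /digit_measure /pushforward /mrestr.
rewrite digits_preimage setIUl (_ : [set t | ~ I01 t /\ _] `&` I01 = set0) ?setU0; last first.
  by apply/seteqP; split => // t [[]].
rewrite (_ : _ `&` I01 = [set` `[v%:R / (level_card n)%:R, v.+1%:R / (level_card n)%:R[%R]).
  rewrite lebesgue_measure_itv /= lte_fin ltr_pM2r ?invr_gt0 // ltr_nat ltnSn.
  by rewrite -EFinB -mulrBl -natrB // subSnn kmaxS mul1r.
apply/seteqP; split => t; rewrite /= I01E in_itv /=; first by case.
move=> /andP[a b]; split; first by rewrite a b.
have t0 : 0 <= t by apply: le_trans a; rewrite divr_ge0.
by rewrite t0 (lt_le_trans b) // ler_pdivrMr // mul1r ler_nat.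
Qed.

End DigitMeasure.

Lemma invlim_encS n n' (y : Y) : X y -> n <= n' -> y n = enc n (dec n' (y n')) :> nat.
Proof.
move=> hX hn; rewrite (invlim_enc hX n) (invlim_enc hX n'); apply: enc_prefix => i hi.
have hin : i < n' by lia.
by rewrite encK //; exact: coords_bounded.
Qed.

Lemma invlim_cylI n v n' v' : n <= n' ->
  X `&` cyl n v `&` cyl n' v' = if enc n (dec n' v') == v then X `&` cyl n' v' else set0.
Proof.
move=> hn; case: ifP => /eqP e; apply/seteqP; split.
- by move=> y [[hX _] h'].
- move=> y [hX h']; split => //; split => //; apply: ord_inj.
  by rewrite (invlim_encS hX hn) h' e.
- by move=> y [[hX hv] h']; apply: e; rewrite -h' -hv (invlim_encS hX hn).
- by [].
Qed.

Definition invlim_cylinders : set (set Y) :=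
  [set B : set Y | measurable B /\ (B `&` X = set0 \/ exists n v, B `&` X = X `&` cyl n v)].

Lemma invlim_cylinders_setI : setI_closed invlim_cylinders.
Proof.
move=> A B [mA hA] [mB hB]; split; first exact: measurableI.
have -> : A `&` B `&` X = (A `&` X) `&` (B `&` X) by rewrite setIACA setIid.
case: hA => [->|[n [v ->]]]; first by left; rewrite set0I.
case: hB => [->|[n' [v' ->]]]; first by left; rewrite setI0.
rewrite setIACA setIid.
wlog hn : n v n' v' / n <= n'.
  move=> W; case: (leqP n n') => hn; first exact: W.
  by rewrite (setIC (cyl n v)); apply: W; exact: ltnW.
by rewrite setIA invlim_cylI //; case: ifP => _; [right; exists n', v' | left].
Qed.

Lemma invlim_cylinders_generate : measurable = <<s invlim_cylinders >>.
Proof.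
apply/seteqP; split.
  apply: smallest_sub; first exact: smallest_sigma_algebra.
  move=> _ [n [v ->]]; apply: sub_sigma_algebra; split; first exact: cyl_measurable.
  by right; exists n, v; rewrite setIC.
by apply: smallest_sub; [exact: sigma_algebra_measurable | move=> B []].
Qed.

Lemma invlim_cyl0 : X = X `&` cyl 0 ord0.
Proof.
by apply/seteqP; split => [y hX|y []] //; split => //; apply: ord_inj; case: (y 0) => -[].
Qed.

Lemma aseq_measurable g : measurable_fun setT (aseq g : Y -> Y).
Proof.
apply: (@measurability _ _ _ _ setT (aseq g : Y -> Y) (@cylinders kmax)) => //.
move=> _ [A [n [v ->]] <-]; rewrite setTI.
exact: (coordinate_measurable (fun a => level_act n g a = v)).
Qed.

Lemma aseqK g : cancel (aseq g) (aseq g^-1%g).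
Proof.
move=> y; apply: functional_extensionality_dep => n.
by rewrite /seqact -level_actM mulVg level_act1.
Qed.

Lemma aseqKV g : cancel (aseq g^-1%g) (aseq g).
Proof. by move=> y; have := aseqK g^-1%g y; rewrite invgK. Qed.

Lemma aseq_invlimE g y : X (aseq g y) <-> X y.
Proof. by split; [rewrite -{2}(aseqK g y) | ]; exact: aseq_invlim. Qed.

Lemma aseq_preimage_cyl g n v :
  aseq g @^-1` (X `&` cyl n v) = X `&` cyl n (level_act n g^-1%g v).
Proof.
apply/seteqP; split => y /=.
  move=> [/aseq_invlimE hX hv]; split => //.
  by rewrite /cyl /= -hv -level_actM mulVg level_act1.
move=> [hX hv]; split; first exact/aseq_invlimE.
by rewrite /cyl /= /seqact hv -level_actM mulgV level_act1.
Qed.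

Section Invariance.
Variable R : realType.
Local Open Scope ring_scope.

Lemma measure_eq_invlim (m1 m2 : {measure set Y -> \bar R}) :
  (m1 setT < +oo)%E ->
  (forall B, measurable B -> m1 B = m1 (B `&` X)) ->
  (forall B, measurable B -> m2 B = m2 (B `&` X)) ->
  (forall n v, m1 (X `&` cyl n v) = m2 (X `&` cyl n v)) ->
  forall B, measurable B -> m1 B = m2 B.
Proof.
move=> m1fin m1X m2X m12.
apply: (measure_unique _ (fun _ => setT) invlim_cylinders_generate invlim_cylinders_setI) => //.
- by move=> _; split => //; right; exists 0, ord0; rewrite setTI -invlim_cyl0.
- by apply/seteqP; split => // y _; exists 0.
- move=> A [mA hA]; rewrite m1X // m2X //.
  by case: hA => [->|[n [v ->]]]; rewrite ?measure0.
Qed.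

Lemma digit_measure_invariant g (B : set Y) : measurable B ->
  digit_measure R (aseq g @^-1` B) = digit_measure R B.
Proof.
move=> mB.
(* The measure instance of [pushforward] takes the measurability of [aseq g]
   as an argument: it is the first goal, and a premise of the others. *)
apply: (@measure_eq_invlim (pushforward (digit_measure R) (aseq g : Y -> Y))
  (digit_measure R)) => //.
- exact: aseq_measurable.
- by move=> mf /=; rewrite /pushforward preimage_setT probability_setT ltry.
- move=> mf C mC /=; rewrite /pushforward digit_measure_invlim [RHS]digit_measure_invlim.
  congr (digit_measure R _); apply/seteqP; split => y [h1 h2]; split => //.
  + by split => //; exact/aseq_invlimE.
  + by case: h1.
- by move=> C mC; exact: digit_measure_invlim.
- by move=> mf n v /=; rewrite /pushforward aseq_preimage_cyl !digit_measure_cyl.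
Qed.

End Invariance.

(** * Ergodicity and hyperfiniteness *)

Lemma level_act_transitive n (v w : 'I_(kmax n).+1) : exists g, level_act n g v = w.
Proof.
have [u [hu e]] := word_act_splice n (dec_bounded n v) (dec_bounded n w).
exists (gword u); apply: ord_inj => /=.
rewrite gact_gword // e -[RHS](@decK n w); last by rewrite -kmaxS.
by apply: enc_prefix => i hi; rewrite /splice hi.
Qed.

Lemma image_aseq_cyl (A : set Y) g n v : (forall h, aseq h @` A = A) ->
  aseq g @` (A `&` cyl n v) = A `&` cyl n (level_act n g v).
Proof.
move=> hA; apply/seteqP; split => y.
  move=> [x [xA xv] <-]; split; first by rewrite -(hA g); exists x.
  by rewrite /cyl /= /seqact xv.
move=> [yA yv]; exists (aseq g^-1%g y); last exact: aseqKV.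
split; first by rewrite -(hA g^-1%g); exists y.
by rewrite /cyl /= /seqact yv -level_actM mulVg level_act1.
Qed.

Lemma image_aseq g (B : set Y) : aseq g @` B = aseq g^-1%g @^-1` B.
Proof.
apply/seteqP; split => y; first by move=> [x hx <-]; rewrite /= aseqK.
by move=> hy; exists (aseq g^-1%g y) => //; rewrite aseqKV.
Qed.

Section Ergodicity.
Variable R : realType.
Local Open Scope ring_scope.

Lemma digit_measure_fin_num (B : set Y) : measurable B -> digit_measure R B \is a fin_num.
Proof.
move=> mB; rewrite ge0_fin_numE ?measure_ge0 //.
by apply: le_lt_trans (probability_le1 _ mB) _; rewrite ltry.
Qed.

(* By transitivity on each level, an invariant set meets all cylinders of
   level [n] in the same measure. *)
Lemma invariant_cyl_measure (A : set Y) n (v : 'I_(kmax n).+1) :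
  measurable A -> (forall g, aseq g @` A = A) ->
  digit_measure R (A `&` cyl n v) = (fine (digit_measure R A) / (kmax n).+1%:R)%:E.
Proof.
move=> mA hA.
have mc w : measurable (A `&` cyl n w) by apply: measurableI => //; exact: cyl_measurable.
set c := fine (digit_measure R (A `&` cyl n ord0)).
have hc w : digit_measure R (A `&` cyl n w) = c%:E.
  have [g <-] := level_act_transitive ord0 w.
  rewrite -image_aseq_cyl // image_aseq digit_measure_invariant //.
  by rewrite /c fineK // digit_measure_fin_num.
have hU : A = \big[setU/set0]_(w < (kmax n).+1) (A `&` cyl n w).
  apply/seteqP; split => [y yA|]; first by rewrite (bigD1 (y n)) //=; left.
  by elim/big_ind: _ => // B C hB hC y [/hB|/hC].
have : digit_measure R A = \sum_(w < (kmax n).+1) digit_measure R (A `&` cyl n w).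
  rewrite [in LHS]hU; apply: measure_semi_additive_ord => //; last by rewrite -hU.
  apply/trivIsetP => i j _ _ ij; apply/seteqP; split => // y [[_ hi] [_ hj]].
  by move: ij; rewrite -hi -hj eqxx.
under eq_bigr do rewrite hc.
rewrite sumEFin sumr_const card_ord hc => -> /=; congr EFin.
by rewrite -[c *+ _]mulr_natr mulfK // pnatr_eq0.
Qed.

(* Restricting the measure to an invariant set [A] gives the measure scaled
   by the mass of [A] (equal on cylinders, hence everywhere); evaluating at
   [A] yields [a = a^2]. *)
Lemma digit_ergodic : ergodic level_act level_proj (digit_measure R).
Proof.
move=> A mA AX hA; change (digit_measure R A = 0%E \/ digit_measure R A = 1%E).
set a := fine (digit_measure R A).
have ea : digit_measure R A = a%:E by rewrite /a fineK // digit_measure_fin_num.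
have a0 : 0 <= a by rewrite /a fine_ge0 // measure_ge0.
have restrA : digit_measure R (A `&` A) = (a%:E * digit_measure R A)%E.
  apply: (@measure_eq_invlim R (mrestr (digit_measure R) mA)
    (mscale (NngNum a0) (digit_measure R))) => //.
  - rewrite /mrestr; apply: le_lt_trans (probability_le1 _ _) _; last by rewrite ltry.
    exact: measurableI.
  - move=> B mB; rewrite /mrestr; congr (digit_measure R _); apply/seteqP; split => y.
      by move=> [hB hAy]; split => //; split => //; exact: AX.
    by move=> [[hB _] hAy].
  - by move=> B mB; rewrite /mscale /=; congr (_ * _)%E; exact: digit_measure_invlim.
  - move=> n v; rewrite /mrestr /mscale /=.
    change (digit_measure R (X `&` cyl n v `&` A) = a%:E * digit_measure R (X `&` cyl n v))%E.
    rewrite digit_measure_cyl.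
    have -> : X `&` cyl n v `&` A = A `&` cyl n v.
      apply/seteqP; split => y; first by move=> [[_ hv] hAy].
      by move=> [hAy hv]; split => //; split => //; exact: AX.
    by rewrite invariant_cyl_measure // -EFinM.
move: restrA; rewrite setIid ea -EFinM => -[] /eqP.
rewrite -subr_eq0 -{1}(mulr1 a) -mulrBr mulf_eq0 subr_eq0 => /orP[/eqP a_0|/eqP a_1].
  by left; rewrite a_0.
by right; rewrite a_1.
Qed.

End Ergodicity.

Lemma coords_measurable i c : measurable [set x : Y | coords x i = c].
Proof. exact: (coordinate_measurable (fun a : 'I_(kmax i.+1).+1 => a %% verts i = c)). Qed.

Lemma tail_eq_measurable q : measurable [set z : Y * Y | tail_eq q z.1 z.2].
Proof.
have -> : [set z : Y * Y | tail_eq q z.1 z.2] =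
    \bigcap_i [set z : Y * Y | q <= i -> coords z.1 i = coords z.2 i].
  by apply/seteqP; split => z h i; [move=> _ hi|]; apply: h.
apply: bigcapT_measurable => i.
have [hi|hi] : i < q \/ q <= i by lia.
  rewrite (_ : [set _ | _] = setT); first exact: measurableT.
  by apply/seteqP; split => // z _ h; move: hi; rewrite ltnNge h.
have -> : [set z : Y * Y | q <= i -> coords z.1 i = coords z.2 i] =
    \bigcup_(c in [set: 'I_(verts i)])
      ([set x : Y | coords x i = c] `*` [set y : Y | coords y i = c]).
  apply/seteqP; split => z.
    move=> /(_ hi) e; have hc : coords z.1 i < verts i by rewrite /coords ltn_pmod.
    by exists (Ordinal hc).
  by move=> [c _ [/= h1 h2]] _; rewrite h1 h2.
apply: fin_bigcup_measurable; first exact: finite_finset.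
by move=> c _; apply: measurableX; exact: coords_measurable.
Qed.

Lemma tail_eq_finite q x : X x -> finite_set [set y : Y | X y /\ tail_eq q x y].
Proof.
move=> hx.
pose extend (v : 'I_(kmax q).+1) := of_coords (splice q (dec q v) (coords x)).
apply: (@sub_finite_set _ _ (extend @` setT)).
  move=> y [hy hq]; exists (y q) => //; rewrite /extend -[RHS](coordsK hy); congr of_coords.
  apply: funext => i; rewrite /splice; case: ltnP => hi; last exact: hq.
  by rewrite (invlim_enc hy q) encK //; exact: coords_bounded.
by apply: finite_image; exact: finite_finset.
Qed.

Lemma digit_hyperfinite (R : realType) : hyperfinite level_act level_proj (digit_measure R).
Proof.
exists set0, tail_eq; split.
- by split; [exact: measurable0 | exact: measure0].
- by split; [exact: tail_eq_measurable | move=> q x y _ _ h i hi; apply: h; lia].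
- move=> q; split => [x _ i _ | x y _ _ h i hi | x y z _ _ _ h1 h2 i hi] //.
    by rewrite h.
  by rewrite h1 // h2.
- by move=> q x hx; exact: tail_eq_finite.
- by move=> x y hx hy _ _; exact: orbit_rel_tail_eq.
Qed.

Lemma digit_induced (R : realType) : induced_measure level_proj (digit_measure R).
Proof.
split; last exact: digit_measure_cyl.
change (digit_measure R X = 1%E).
by have := @digit_measure_invlim R setT; rewrite setTI => <-; exact: probability_setT.
Qed.

Theorem theorem7p1 (R : realType) :
  exists (G : groupType), finitely_generated G /\ ~ amenable R G /\
  exists (k : nat -> nat)
         (act : forall n, G -> 'I_(k n).+1 -> 'I_(k n).+1)
         (p : forall n, 'I_(k n.+1).+1 -> 'I_(k n).+1)
         (mu : probability (seqmeas k) R),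
    profinite_data act p /\ induced_measure p mu /\
    [/\ ergodic act p mu,
        faithful act p,
        hyperfinite act p mu &
        topologically_free act p].
Proof.
exists Gamma; split; first exact: freeC2_finitely_generated.
split.
  by apply: (@freeC2_nonamenable R _ ord0 (inord 1) (inord 2)); rewrite -val_eqE /= ?inordK.
exists kmax, level_act, level_proj, (digit_measure R).
split; first exact: level_profinite_data.
split; first exact: digit_induced.
split.
- exact: digit_ergodic.
- exact: level_faithful.
- exact: digit_hyperfinite.
- exact: level_topologically_free.
Qed.
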